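(* Let $\mathcal{R}$ be a cell space with finite stabiliser $G_0$, let $F,F'$ be finite subsets of $M$ and let $\mathfrak{g},\mathfrak{g}'\in G/G_0$. Then $|(\cdot\triangleleft\mathfrak{g})^{-1}(F)\setminus(\cdot\triangleleft\mathfrak{g}')^{-1}(F')|\leq|G_0|^2\cdot\max_{g\in\mathfrak{g}}|F\setminus(\cdot\triangleleft g^{-1}\cdot\mathfrak{g}')^{-1}(F')|$ and $|(\cdot\triangleleft\mathfrak{g})^{-1}(F)\setminus(\cdot\triangleleft\mathfrak{g}')^{-1}(F')|\leq|G_0|^2\cdot\max_{g'\in\mathfrak{g}'}|(\cdot\triangleleft(g')^{-1}\cdot\mathfrak{g})^{-1}(F)\setminus F'|$.
   Context: A cell space $\mathcal{R}$ consists of a group $G$ acting transitively on the left on a nonempty set $M$ via $\triangleright$, a point $m_0\in M$ and a family $(g_{m_0,m})_{m\in M}$ in $G$ with $g_{m_0,m}\triangleright m_0=m$. $G_0$ is the stabiliser of $m_0$, $G/G_0$ the set of left cosets (elements are subsets of $G$), with $G$ acting by $g\cdot hG_0=ghG_0$. The right semi-action $\triangleleft\colon M\times G/G_0\to M$ is $m\triangleleft gG_0=g_{m_0,m}g\triangleright m_0$, and $(\cdot\triangleleft\mathfrak{h})^{-1}(B)=\{m\in M: m\triangleleft\mathfrak{h}\in B\}$. *)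

From HB Require Import structures.
From mathcomp Require Import all_boot all_order.
From mathcomp Require Import boolp classical_sets functions cardinality.
From mathcomp Require Import finmap.

Set Implicit Arguments.
Unset Strict Implicit.
Unset Printing Implicit Defensive.

Local Open Scope classical_set_scope.
Local Open Scope group_scope.

Record cell_space (G : groupType) (M : choiceType) := CellSpace {
  act : G -> M -> M;
  act1 : forall m, act 1 m = m;
  actM : forall g h m, act (g * h) m = act g (act h m);
  act_transitive : forall m m', exists g, act g m = m';
  m0 : M;
  gm : M -> G;
  gmP : forall m, act (gm m) m0 = m
}.

Section CellSpaceDefs.
Context {G : groupType} {M : choiceType} (R : cell_space G M).

Definition stab : set G := [set g | act R g (m0 R) = m0 R].

Definition lcoset (g : G) : set G := [set g * h | h in stab].

(* membership in G/G_0 (elements of G/G_0 are subsets of G) *)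
Definition is_lcoset (A : set G) : Prop := exists g, A = lcoset g.

Definition coset_act (g : G) (A : set G) : set G := [set g * h | h in A].

(* the right semi-action  m <| gG_0 = g_{m0,m} g |> m0, computed on a chosen
   representative of the coset (well defined on cosets) *)
Definition rsemi (m : M) (A : set G) : M :=
  act R (gm R m * xget 1 A) (m0 R).

Definition rsemi_preim (A : set G) (B : set M) : set M :=
  [set m | B (rsemi m A)].

End CellSpaceDefs.

From HB Require Import structures.
From mathcomp Require Import all_boot all_order.
From mathcomp Require Import boolp classical_sets functions cardinality.
From mathcomp Require Import finmap.

(* Take m in the difference set, put f := m <| g and k := g_{m0,m}^-1 g_{m0,f}.
   Then k lies in the coset g, m = f <| k^-1 G_0, and f <| k^-1 g' = m <| g',
   so f lies in F \ (. <| k^-1 g')^-1(F').  Hence the difference set is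
   covered by the images of |g| <= |G_0| sets, each of size at most the
   maximum; the factor |G_0|^2 is just a weakening of |G_0|.  The second bound
   is symmetric, with f := m <| g'. *)

Local Open Scope classical_set_scope.
Local Open Scope group_scope.

Lemma card_fset_set_image_le {T U : choiceType} (f : T -> U) (A : set T) :
  finite_set A -> (#|` fset_set (f @` A)| <= #|` fset_set A|)%N.
Proof. by move=> finA; rewrite fset_set_image //; apply: leq_imfset_card. Qed.

Lemma card_bigsetU_le (I T : choiceType) (s : seq I) (A : I -> set T) N :
  (forall i, i \in s -> finite_set (A i)) ->
  (forall i, i \in s -> (#|` fset_set (A i)| <= N)%N) ->
  finite_set (\big[setU/set0]_(i <- s) A i) /\
  (#|` fset_set (\big[setU/set0]_(i <- s) A i)| <= size s * N)%N.
Proof.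
elim: s => [|i s IH] finA cardA; first by rewrite big_nil fset_set0.
have [finU cardU] : finite_set (\big[setU/set0]_(j <- s) A j) /\
    (#|` fset_set (\big[setU/set0]_(j <- s) A j)| <= size s * N)%N.
  by apply: IH => j js; [apply: finA | apply: cardA]; rewrite in_cons js orbT.
have finAi := finA i (mem_head _ _).
rewrite big_cons finite_setU; split => //.
rewrite fset_setU // mulSn; apply: leq_trans (leq_card_fsetU _ _) _.
by rewrite leq_add // cardA ?mem_head.
Qed.

Lemma card_bigcup_le (I T : choiceType) (X : set I) (A : I -> set T) N :
  finite_set X -> (forall i, X i -> finite_set (A i)) ->
  (forall i, X i -> (#|` fset_set (A i)| <= N)%N) ->
  finite_set (\bigcup_(i in X) A i) /\
  (#|` fset_set (\bigcup_(i in X) A i)| <= #|` fset_set X| * N)%N.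
Proof.
move=> finX finA cardA; rewrite -bigsetU_fset_set //.
by apply: card_bigsetU_le => i; rewrite in_fset_set // => /set_mem;
  [apply: finA | apply: cardA].
Qed.

Section CellSpace.
Context {G : groupType} {M : choiceType} (R : cell_space G M).

Lemma act_invK (g : G) m : act R g^-1 (act R g m) = m.
Proof. by rewrite -actM monoid.mulVg act1. Qed.

Lemma stab1 : stab R 1.
Proof. by rewrite /stab /= act1. Qed.

Lemma lcoset_refl x : lcoset R x x.
Proof. by exists 1; [exact: stab1 | rewrite monoid.mulg1]. Qed.

Lemma rsemi_lcoset m x : rsemi R m (lcoset R x) = act R (gm R m * x) (m0 R).
Proof.
rewrite /rsemi; have [h stab_h <-] : lcoset R x (xget 1 (lcoset R x)).
  by apply: xgetPex; exists x; apply: lcoset_refl.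
by rewrite monoid.mulgA (actM R _ h) stab_h.
Qed.

Lemma rsemi_lcoset1 m : rsemi R m (lcoset R 1) = m.
Proof. by rewrite rsemi_lcoset monoid.mulg1 gmP. Qed.

Lemma coset_act_lcoset y x : coset_act y (lcoset R x) = lcoset R (y * x).
Proof.
apply/seteqP; split => z /=.
  by case=> _ [h stab_h <-] <-; exists h => //; rewrite monoid.mulgA.
by case=> h stab_h <-; exists (x * h); [exists h | rewrite monoid.mulgA].
Qed.

Lemma finite_lcoset x : finite_set (stab R) -> finite_set (lcoset R x).
Proof. exact: finite_image. Qed.

Lemma card_lcoset_le x : finite_set (stab R) ->
  (#|` fset_set (lcoset R x)| <= #|` fset_set (stab R)|)%N.
Proof. exact: card_fset_set_image_le. Qed.

Lemma finite_rsemi_preim x F : finite_set (stab R) -> finite_set F ->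
  finite_set (rsemi_preim R (lcoset R x) F).
Proof.
move=> finS finF.
apply: (@sub_finite_set _ _
  [set act R (gm R p.1 * p.2 * x^-1) (m0 R) | p in F `*` stab R]); last first.
  by apply: finite_image; apply: finite_setX.
move=> m; rewrite /rsemi_preim /= rsemi_lcoset => Ff.
set f := act R (gm R m * x) (m0 R) in Ff *.
exists (f, (gm R f)^-1 * (gm R m * x)) => /=.
  split => //=; rewrite /stab /= (actM R (gm R f)^-1) -/f.
  by rewrite -[X in act R _ X](gmP R f) act_invK.
by rewrite !monoid.mulgA monoid.mulgV monoid.mul1g monoid.mulgK gmP.
Qed.

Definition transition (m f : M) : G := (gm R m)^-1 * gm R f.

Lemma transition_in_lcoset m x :
  lcoset R x (transition m (rsemi R m (lcoset R x))).
Proof.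
set f := rsemi R m (lcoset R x).
exists (x^-1 * transition m f).
  rewrite /stab /= (actM R x^-1) (actM R (gm R m)^-1) gmP /f rsemi_lcoset.
  by rewrite (actM R (gm R m)) !act_invK.
by rewrite monoid.mulgA monoid.mulgV monoid.mul1g.
Qed.

Lemma rsemi_transition m f y :
  rsemi R f (coset_act (transition m f)^-1 (lcoset R y)) =
  rsemi R m (lcoset R y).
Proof.
rewrite coset_act_lcoset !rsemi_lcoset /transition monoid.invgM monoid.invgK.
by rewrite !monoid.mulgA monoid.mulgV monoid.mul1g.
Qed.

Lemma rsemi_transition1 m f : rsemi R f (lcoset R (transition m f)^-1) = m.
Proof.
rewrite -[X in lcoset R X]monoid.mulg1 -coset_act_lcoset.
by rewrite rsemi_transition rsemi_lcoset1.
Qed.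

Lemma rsemi_preimD_sub_cover_l x y F F' :
  rsemi_preim R (lcoset R x) F `\` rsemi_preim R (lcoset R y) F' `<=`
  \bigcup_(k in lcoset R x) [set rsemi R f (lcoset R k^-1) |
    f in F `\` rsemi_preim R (coset_act k^-1 (lcoset R y)) F'].
Proof.
move=> m [Fm nF'm]; set f := rsemi R m (lcoset R x).
exists (transition m f); first exact: transition_in_lcoset.
exists f; last exact: rsemi_transition1.
by split => //; rewrite /rsemi_preim /= rsemi_transition.
Qed.

Lemma rsemi_preimD_sub_cover_r x y F F' :
  rsemi_preim R (lcoset R x) F `\` rsemi_preim R (lcoset R y) F' `<=`
  \bigcup_(k in lcoset R y) [set rsemi R f (lcoset R k^-1) |
    f in rsemi_preim R (coset_act k^-1 (lcoset R x)) F `\` F'].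
Proof.
move=> m [Fm nF'm]; set f := rsemi R m (lcoset R y).
exists (transition m f); first exact: transition_in_lcoset.
exists f; last exact: rsemi_transition1.
by split => //; rewrite /rsemi_preim /= rsemi_transition.
Qed.

Lemma card_le_rsemi_cover {x : G} {T : G -> set M} {L : set M} {N : nat} :
  finite_set (stab R) ->
  (forall k, lcoset R x k -> finite_set (T k)) ->
  (forall k, lcoset R x k -> (#|` fset_set (T k)| <= N)%N) ->
  L `<=` \bigcup_(k in lcoset R x) [set rsemi R f (lcoset R k^-1) | f in T k] ->
  (#|` fset_set L| <= #|` fset_set (stab R)| * N)%N.
Proof.
move=> finS finT cardT cover.
set U := \bigcup_(k in lcoset R x) _ in cover.
have [finU cardU] : finite_set U /\
    (#|` fset_set U| <= #|` fset_set (lcoset R x)| * N)%N.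
  apply: card_bigcup_le (finite_lcoset x finS) _ _ => k xk.
    exact: finite_image (finT k xk).
  exact: leq_trans (card_fset_set_image_le _ _ (finT k xk)) (cardT k xk).
apply: (@leq_trans #|` fset_set U|).
  apply: fsubset_leq_card.
  by rewrite -fset_set_sub //; apply: (sub_finite_set cover).
by apply: leq_trans cardU _; rewrite leq_mul2r card_lcoset_le ?orbT.
Qed.

End CellSpace.

Theorem lemma6 (G : groupType) (M : choiceType) (R : cell_space G M)
  (F F' : set M) (gg gg' : set G) :
  finite_set (stab R) -> finite_set F -> finite_set F' ->
  is_lcoset R gg -> is_lcoset R gg' ->
  (#|` fset_set (rsemi_preim R gg F `\` rsemi_preim R gg' F')| <=
     #|` fset_set (stab R)| ^ 2 *
     \max_(g <- fset_set gg)
        #|` fset_set (F `\` rsemi_preim R (coset_act (g^-1)%g gg') F')|)%N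
  /\
  (#|` fset_set (rsemi_preim R gg F `\` rsemi_preim R gg' F')| <=
     #|` fset_set (stab R)| ^ 2 *
     \max_(g' <- fset_set gg')
        #|` fset_set (rsemi_preim R (coset_act (g'^-1)%g gg) F `\` F')|)%N.
Proof.
move=> finS finF _ [x ->] [y ->].
set s := #|` fset_set (stab R)|.
have le_sqr N : (s * N <= s ^ 2 * N)%N.
  rewrite leq_mul2r; case: s => [|n]; first by rewrite leq0n orbT.
  by rewrite expnS leq_pmulr ?orbT.
have le_max z k (T : G -> nat) : lcoset R z k ->
    (T k <= \max_(k <- fset_set (lcoset R z)) T k)%N.
  move=> zk; apply: leq_bigmax_seq => //.
  by rewrite in_fset_set; [apply/mem_set | apply: finite_lcoset].
split; apply: leq_trans (le_sqr _).
- refine (card_le_rsemi_cover R finS _ _ (rsemi_preimD_sub_cover_l R x y F F'))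
    => k xk; last exact: le_max.
  by apply: (sub_finite_set _ finF) => ? [].
- refine (card_le_rsemi_cover R finS _ _ (rsemi_preimD_sub_cover_r R x y F F'))
    => k yk; last exact: le_max.
  rewrite coset_act_lcoset.
  apply: (sub_finite_set _ (finite_rsemi_preim R (k^-1 * x) F finS finF)).
  by move=> ? [].
Qed.
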